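(* Let $N\ge 2$, let $0\le p_{g_i}^{\min}\le p_{g_i}^{\max}$ for $i=1,\dots,N$, and let $C$ be a real number (the quantity $CVaR_\alpha(\sum_{i=1}^N s_i^t)$). Assume (a) $\min_{1\le i\le N} p_{g_i}^{\min}\le C\le\sum_{i=1}^N p_{g_i}^{\max}$, and (b) $\max_{1\le i\le N} p_{g_i}^{\min}<\min_{1\le i\le N}\{p_{g_i}^{\max}-p_{g_i}^{\min}\}$. Let $k\in\{1,\dots,N\}$ be the unique index with $\sum_{i=1}^{k-1}p_{g_i}^{\max}<C\le\sum_{i=1}^k p_{g_i}^{\max}$, and suppose $k\ge 2$. If $0<C-\sum_{i=1}^{k-1}p_{g_i}^{\max}<p_{g_k}^{\min}$, then $$p_{g_{k-1}}^{\min}<C-\sum_{i=1}^{k-2}p_{g_i}^{\max}-p_{g_k}^{\min}<p_{g_{k-1}}^{\max}.$$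
   Context: $p_{g_i}^{\min},p_{g_i}^{\max}$ are the minimum and maximum power output of the non-renewable generator at bus $i$; empty sums are zero. *)

From mathcomp Require Import all_boot all_order all_algebra.
Set Implicit Arguments. Unset Strict Implicit. Unset Printing Implicit Defensive.
Import Order.TTheory GRing.Theory Num.Theory.
Local Open Scope ring_scope.

(* Generators are indexed 1..N; data are functions nat -> R (only 1..N used). *)

Definition minN {R : realDomainType} (N : nat) (f : nat -> R) : R :=
  foldr (fun i acc => Num.min (f i) acc) (f 1%N) (iota 2 N.-1).

Definition maxN {R : realDomainType} (N : nat) (f : nat -> R) : R :=
  foldr (fun i acc => Num.max (f i) acc) (f 1%N) (iota 2 N.-1).

(* Write S for the sum of the first k-2 capacities and d := C - S - pmax (k-1), so that
   0 < d < pmin k and the middle quantity is pmax (k-1) + d - pmin k. The upper bound is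
   d < pmin k. For the lower bound, assumption (b) gives
   pmin k <= max pmin < min (pmax - pmin) <= pmax (k-1) - pmin (k-1), and d > 0. *)
From mathcomp Require Import all_boot all_order all_algebra.
From mathcomp Require Import lra.
Set Implicit Arguments. Unset Strict Implicit. Unset Printing Implicit Defensive.
Import Order.TTheory GRing.Theory Num.Theory.
Local Open Scope ring_scope.

Section FoldExtrema.

Variables (R : realDomainType) (f : nat -> R).

Lemma foldr_min_le (a : nat) (s : seq nat) (i : nat) :
  i \in a :: s -> foldr (fun j acc => Num.min (f j) acc) (f a) s <= f i.
Proof.
elim: s => [|b s IH] /=; first by rewrite inE => /eqP ->.
rewrite !inE ge_min => /or3P[i_a | /eqP-> | i_s]; rewrite ?lexx //.
all: by rewrite IH ?inE ?i_a ?i_s ?orbT.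
Qed.

Lemma le_foldr_max (a : nat) (s : seq nat) (i : nat) :
  i \in a :: s -> f i <= foldr (fun j acc => Num.max (f j) acc) (f a) s.
Proof.
elim: s => [|b s IH] /=; first by rewrite inE => /eqP ->.
rewrite !inE le_max => /or3P[i_a | /eqP-> | i_s]; rewrite ?lexx //.
all: by rewrite IH ?inE ?i_a ?i_s ?orbT.
Qed.

Lemma mem_iota1_pred (N i : nat) : (1 <= i <= N)%N -> i \in 1%N :: iota 2 N.-1.
Proof.
case/andP=> i_ge1 i_leN; have N_gt0 : (0 < N)%N := leq_trans i_ge1 i_leN.
by rewrite -[_ :: _]/(iota 1 N.-1.+1) prednK // mem_iota i_ge1 add1n ltnS.
Qed.

Lemma minN_le (N i : nat) : (1 <= i <= N)%N -> minN N f <= f i.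
Proof. by move=> /mem_iota1_pred; apply: foldr_min_le. Qed.

Lemma le_maxN (N i : nat) : (1 <= i <= N)%N -> f i <= maxN N f.
Proof. by move=> /mem_iota1_pred; apply: le_foldr_max. Qed.

End FoldExtrema.

Theorem lemma1 (R : realFieldType) (N : nat) (pmin pmax : nat -> R) (C : R)
  (k : nat) :
  (2 <= N)%N ->
  (forall i, (1 <= i <= N)%N -> 0 <= pmin i /\ pmin i <= pmax i) ->
  minN N pmin <= C <= \sum_(1 <= i < N.+1) pmax i ->
  maxN N pmin < minN N (fun i => pmax i - pmin i) ->
  (1 <= k <= N)%N ->
  \sum_(1 <= i < k) pmax i < C <= \sum_(1 <= i < k.+1) pmax i ->
  (2 <= k)%N ->
  0 < C - \sum_(1 <= i < k) pmax i < pmin k ->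
  pmin k.-1 < C - \sum_(1 <= i < k.-1) pmax i - pmin k /\
  C - \sum_(1 <= i < k.-1) pmax i - pmin k < pmax k.-1.
Proof.
move=> _ _ _ gap_assum /andP[_ k_leN] _ k_ge2 /andP[excess_gt0 excess_lt].
have k_range : (1 <= k <= N)%N by rewrite k_leN (ltnW k_ge2).
have k1_range : (1 <= k.-1 <= N)%N.
  by rewrite -ltnS prednK ?k_ge2 ?(leq_trans (leq_pred k)) // ltnW.
have gap : pmin k < pmax k.-1 - pmin k.-1.
  apply: (le_lt_trans (le_maxN pmin k_range)).
  apply: (lt_le_trans gap_assum).
  exact: (minN_le (fun i => pmax i - pmin i) k1_range).
have sum_split : \sum_(1 <= i < k) pmax i = \sum_(1 <= i < k.-1) pmax i + pmax k.-1.
  by rewrite -{1}(prednK (ltnW k_ge2)) big_nat_recr //= -ltnS prednK // ltnW.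
rewrite sum_split in excess_gt0 excess_lt.
by split; lra.
Qed.
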